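(* (1) The model admits a unique single-strain ($I_1$)-infection equilibrium $E_1=(\bar S,\bar V_1,\bar I_1,0)$ with $\bar S,\bar V_1,\bar I_1>0$ if and only if $\mathcal{R}_1>1$. (2) The model admits a single-strain ($I_2$)-infection equilibrium $E_2=(\tilde S,\tilde V_1,0,\tilde I_2)$ with $\tilde S,\tilde V_1,\tilde I_2>0$ if and only if $\mathcal{R}_2>1$. Moreover: - if $-\alpha_2r\mu-\alpha_2\mu^2+k\Lambda r<0$, then $E_2$ is unique; - if $-\alpha_2r\mu-\alpha_2\mu^2+k\Lambda r>0$, then the model has at most one single-strain ($I_2$)-infection equilibrium with $\tilde I_2$ in the interval $\left[\frac{-r\alpha_2-\alpha_2\mu+\sqrt{r\alpha_2(r\alpha_2+\alpha_2\mu+k\Lambda)}}{\alpha_2k},\frac{\Lambda}{\alpha_2}\right]$.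
   Context: The model is $\dot S=\Lambda-F_1(S,I_1)-F_2(S,I_2)-\lambda S$, $\dot V_1=rS-(\mu+kI_2)V_1$, $\dot I_1=F_1(S,I_1)-\alpha_1I_1$, $\dot I_2=F_2(S,I_2)+kI_2V_1-\alpha_2I_2$ on $\mathbb{R}^4_+$. The constants $\Lambda,\mu,r,k,\gamma_1,\gamma_2>0$ and $v_1,v_2\ge0$; $\lambda=r+\mu$ and $\alpha_i=\gamma_i+v_i+\mu$. For $i=1,2$ the incidence functions satisfy: - (H1) $F_i(S,I_i)=I_if_i(S,I_i)$ with $F_i,f_i\in C^2(\mathbb{R}^2_+,\mathbb{R}_+)$ and $F_i(0,I_i)=F_i(S,0)=0$; - (H2) $\partial f_i/\partial S>0$ and $\partial f_i/\partial I_i\le0$ on $\mathbb{R}^2_+$; - (H3) $\lim_{I_i\to0^+}F_i(S,I_i)/I_i$ exists and is positive for $S>0$. Let $S^0=\Lambda/\lambda$, $V_1^0=r\Lambda/(\mu\lambda)$ and $\sigma_i=\frac{\partial F_i}{\partial I_i}(S^0,0)$. Set $\mathcal{R}_1=\sigma_1/\alpha_1$ and $\mathcal{R}_2=\sigma_2/\alpha_2+\frac{kr\Lambda}{\alpha_2\mu\lambda}$. *)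

From Stdlib Require Import Reals.
From Coquelicot Require Import Coquelicot.
Open Scope R_scope.

Definition pd1 (g : R -> R -> R) (x y : R) : R := Derive (fun t => g t y) x.
Definition pd2 (g : R -> R -> R) (x y : R) : R := Derive (fun t => g x t) y.

Definition uncurry2 (g : R -> R -> R) : R * R -> R := fun z => g (fst z) (snd z).

Definition C1_2d (g : R -> R -> R) : Prop :=
  forall x y : R,
    ex_derive (fun t => g t y) x /\ ex_derive (fun t => g x t) y /\
    continuous (uncurry2 g) (x, y) /\
    continuous (uncurry2 (pd1 g)) (x, y) /\
    continuous (uncurry2 (pd2 g)) (x, y).

Definition C2_2d (g : R -> R -> R) : Prop :=
  C1_2d g /\ C1_2d (pd1 g) /\ C1_2d (pd2 g).

(* Hypotheses (H1)-(H3) on an incidence function F = I f.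
   F, f are given on all of R^2 (C^2 there, i.e. C^2 up to the boundary of
   R^2_+); the remaining conditions are imposed on R^2_+. *)
Definition incidence_hyp (F f : R -> R -> R) : Prop :=
  C2_2d F /\ C2_2d f /\
  (forall S I, 0 <= S -> 0 <= I -> F S I = I * f S I) /\
  (forall S I, 0 <= S -> 0 <= I -> 0 <= F S I /\ 0 <= f S I) /\
  (forall I, 0 <= I -> F 0 I = 0) /\
  (forall S, 0 <= S -> F S 0 = 0) /\
  (forall S I, 0 <= S -> 0 <= I -> 0 < pd1 f S I /\ pd2 f S I <= 0) /\
  (forall S, 0 < S -> exists l : R, 0 < l /\
      filterlim (fun I => F S I / I) (at_right 0) (locally l)).

Definition is_equilibrium (Lambda mu r k alpha1 alpha2 : R)
    (F1 F2 : R -> R -> R) (S V1 I1 I2 : R) : Prop :=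
  0 <= S /\ 0 <= V1 /\ 0 <= I1 /\ 0 <= I2 /\
  Lambda - F1 S I1 - F2 S I2 - (r + mu) * S = 0 /\
  r * S - (mu + k * I2) * V1 = 0 /\
  F1 S I1 - alpha1 * I1 = 0 /\
  F2 S I2 + k * I2 * V1 - alpha2 * I2 = 0.

Definition is_E1 Lambda mu r k alpha1 alpha2 F1 F2 (S V1 I1 : R) : Prop :=
  0 < S /\ 0 < V1 /\ 0 < I1 /\
  is_equilibrium Lambda mu r k alpha1 alpha2 F1 F2 S V1 I1 0.

Definition is_E2 Lambda mu r k alpha1 alpha2 F1 F2 (S V1 I2 : R) : Prop :=
  0 < S /\ 0 < V1 /\ 0 < I2 /\
  is_equilibrium Lambda mu r k alpha1 alpha2 F1 F2 S V1 0 I2.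

Definition S0 (Lambda mu r : R) : R := Lambda / (r + mu).
Definition sigma (F : R -> R -> R) (Lambda mu r : R) : R :=
  pd2 F (S0 Lambda mu r) 0.

Definition repr1 (F1 : R -> R -> R) (Lambda mu r alpha1 : R) : R :=
  sigma F1 Lambda mu r / alpha1.
Definition repr2 (F2 : R -> R -> R) (Lambda mu r k alpha2 : R) : R :=
  sigma F2 Lambda mu r / alpha2 + k * r * Lambda / (alpha2 * mu * (r + mu)).

From Pilot Require Import Defs.
From Stdlib Require Import Reals Ranalysis5 Lra Psatz.
From Coquelicot Require Import Coquelicot.
Open Scope R_scope.

(* At an equilibrium with a single strain present, the S- and V-equations
   express S and V as explicit functions of the infected coordinate I, so such
   equilibria are the roots in (0, Lambda/alpha) of a scalar equation
   g I = alpha.  Since F = I f, sigma = f(S0, 0), so alpha R = g 0, whereas g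
   vanishes at I = Lambda/alpha because f(0, I) = 0; the intermediate value
   theorem gives existence when R > 1.  As f increases in S and does not
   increase in I, g decreases wherever S and V decrease along the curve.  For
   strain 1, S is strictly decreasing, which gives necessity and uniqueness.
   For strain 2, V is strictly decreasing and S decreases exactly where the
   quadratic [S2_slope] is nonnegative: everywhere when
   k Lambda r < alpha2 mu (r + mu), and beyond its positive root otherwise.
   Necessity for strain 2 only needs S <= S0 and V < [V2 0]. *)

Lemma MVT_Derive (g : R -> R) (a b : R) : a < b ->
  (forall x, a <= x <= b -> ex_derive g x) ->
  exists c, a <= c <= b /\ g b - g a = Derive g c * (b - a).
Proof.
  intros Hab Hg.
  destruct (MVT_gen g a b (Derive g)) as [c [Hc E]].
  - rewrite Rmin_left, Rmax_right by lra. intros x Hx.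
    apply Derive_correct, Hg; lra.
  - rewrite Rmin_left, Rmax_right by lra. intros x Hx.
    apply continuity_pt_filterlim. apply (ex_derive_continuous g), Hg; lra.
  - rewrite Rmin_left, Rmax_right in Hc by lra. eauto.
Qed.

Lemma derive_pos_lt (g : R -> R) (a b : R) : a < b ->
  (forall x, a <= x <= b -> ex_derive g x /\ 0 < Derive g x) -> g a < g b.
Proof.
  intros Hab Hg.
  destruct (MVT_Derive g a b) as [c [Hc E]]; [exact Hab | apply Hg |].
  destruct (Hg c Hc). nra.
Qed.

Lemma derive_nonpos_le (g : R -> R) (a b : R) : a <= b ->
  (forall x, a <= x <= b -> ex_derive g x /\ Derive g x <= 0) -> g b <= g a.
Proof.
  intros Hab Hg. destruct (Req_dec a b) as [<- | Hne]; [lra|].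
  destruct (MVT_Derive g a b) as [c [Hc E]]; [lra | apply Hg |].
  destruct (Hg c Hc). nra.
Qed.

Lemma IVT_open (g : R -> R) (a b : R) :
  (forall x, a <= x <= b -> continuity_pt g x) -> a < b -> g a < 0 -> 0 < g b ->
  exists z, a < z < b /\ g z = 0.
Proof.
  intros Hg Hab Ha Hb.
  destruct (IVT_interv g a b Hg Hab Ha Hb) as [z [Hz Hgz]].
  exists z. split; [|exact Hgz].
  split; apply Rnot_le_lt; intros Hle.
  - replace z with a in Hgz by lra. lra.
  - replace z with b in Hgz by lra. lra.
Qed.

Lemma derive_at_0_of_right_factor (g h : R -> R) (l : R) :
  derivable_pt_lim g 0 l -> continuity_pt h 0 ->
  (forall t, 0 <= t -> g t = t * h t) -> l = h 0.
Proof.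
  intros Hg Hh Hgh. apply cond_eq. intros eps Heps.
  destruct (Hg (eps / 2)) as [d1 Hd1]; [lra|].
  destruct (proj1 (continuity_pt_locally h 0) Hh (mkposreal (eps / 2) ltac:(lra)))
    as [d2 Hd2].
  pose proof (cond_pos d1). pose proof (cond_pos d2).
  set (t := Rmin d1 d2 / 2).
  assert (Ht : 0 < t /\ t < d1 /\ t < d2).
  { unfold t. pose proof (Rmin_l d1 d2). pose proof (Rmin_r d1 d2).
    pose proof (Rmin_glb_lt d1 d2 0). lra. }
  assert (Hq : Rabs ((g (0 + t) - g 0) / t - l) < eps / 2).
  { apply Hd1; [lra|]. rewrite Rabs_pos_eq; lra. }
  assert (Hc : Rabs (h t - h 0) < eps / 2).
  { apply Hd2. unfold ball; simpl. unfold AbsRing_ball, abs, minus, plus, opp; simpl.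
    rewrite Rabs_pos_eq; lra. }
  rewrite Rplus_0_l, !Hgh, Rmult_0_l, Rminus_0_r in Hq by lra.
  replace (t * h t / t) with (h t) in Hq by (field; lra).
  apply Rabs_def2 in Hq. apply Rabs_def2 in Hc. apply Rabs_def1; lra.
Qed.

Section Incidence.

Variables F f : R -> R -> R.
Hypothesis HF : incidence_hyp F f.

Lemma incidence_factor S I : 0 <= S -> 0 <= I -> F S I = I * f S I.
Proof. apply HF. Qed.

Lemma incidence_nonneg S I : 0 <= S -> 0 <= I -> 0 <= F S I.
Proof. apply HF. Qed.

Lemma incidence_I0 S : 0 <= S -> F S 0 = 0.
Proof. apply HF. Qed.

Lemma f_S0 I : 0 < I -> f 0 I = 0.
Proof.
  intros HI. destruct HF as [_ [_ [_ [_ [HF0 _]]]]].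
  pose proof (HF0 I ltac:(lra)) as H0.
  rewrite incidence_factor in H0 by lra.
  destruct (Rmult_integral _ _ H0); lra.
Qed.

Lemma f_lt_S S S' I : 0 <= S -> S < S' -> 0 <= I -> f S I < f S' I.
Proof.
  intros HS HSS' HI. destruct HF as [_ [[C1f _] [_ [_ [_ [_ [Hmono _]]]]]]].
  apply (derive_pos_lt (fun t => f t I)); [exact HSS' |].
  intros x Hx. split; [apply C1f | apply Hmono; lra].
Qed.

Lemma f_le_S S S' I : 0 <= S -> S <= S' -> 0 <= I -> f S I <= f S' I.
Proof.
  intros HS HSS' HI. destruct (Req_dec S S') as [<- | Hne]; [lra|].
  apply Rlt_le, f_lt_S; lra.
Qed.

Lemma f_antitone_I S I I' : 0 <= S -> 0 <= I -> I <= I' -> f S I' <= f S I.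
Proof.
  intros HS HI HII'. destruct HF as [_ [[C1f _] [_ [_ [_ [_ [Hmono _]]]]]]].
  apply (derive_nonpos_le (fun t => f S t)); [exact HII' |].
  intros x Hx. split; [apply C1f | apply Hmono; lra].
Qed.

Lemma continuity_pt_f_comp (s : R -> R) a :
  continuity_pt s a -> continuity_pt (fun I => f (s I) I) a.
Proof.
  intros Hs. destruct HF as [_ [[C1f _] _]].
  apply continuity_pt_filterlim.
  apply (continuous_comp_2 s (fun x => x) f).
  - apply continuity_pt_filterlim, Hs.
  - apply continuous_id.
  - apply (C1f (s a) a).
Qed.

Lemma pd2_I0 S : 0 <= S -> pd2 F S 0 = f S 0.
Proof.
  intros HS. destruct HF as [[C1F _] [[C1f _] _]].
  apply (derive_at_0_of_right_factor (fun t => F S t)).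
  - apply is_derive_Reals, Derive_correct, C1F.
  - apply continuity_pt_filterlim, (ex_derive_continuous (fun t => f S t)), C1f.
  - intros t Ht. apply incidence_factor; lra.
Qed.

End Incidence.

Section SingleStrain1.

Variables (Lambda mu r k a1 a2 : R) (F1 f1 F2 f2 : R -> R -> R).
Hypotheses (HLambda : 0 < Lambda) (Hmu : 0 < mu) (Hr : 0 < r) (Ha1 : 0 < a1)
  (HF1 : incidence_hyp F1 f1) (HF2 : incidence_hyp F2 f2).

Definition S1 (I : R) : R := (Lambda - a1 * I) / (r + mu).
Definition g1 (I : R) : R := f1 (S1 I) I.

Lemma is_E1_iff S V I :
  is_E1 Lambda mu r k a1 a2 F1 F2 S V I <->
  (0 < I /\ a1 * I < Lambda) /\ S = S1 I /\ V = r * S / mu /\ g1 I = a1.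
Proof.
  unfold is_E1, is_equilibrium, g1, S1. split.
  - intros (HS & HV & HI & _ & _ & _ & _ & e1 & e2 & e3 & _).
    rewrite (incidence_I0 F2 f2 HF2) in e1 by lra.
    rewrite (incidence_factor F1 f1 HF1) in e1, e3 by lra.
    assert (Hf : f1 S I = a1).
    { assert (HI0 : I * (f1 S I - a1) = 0) by lra.
      destruct (Rmult_integral _ _ HI0); lra. }
    assert (HS1 : S = (Lambda - a1 * I) / (r + mu)) by (field_simplify_eq; lra).
    rewrite <- HS1. repeat split; try lra.
    + nra.
    + field_simplify_eq; lra.
  - intros ((HI & HIL) & HS & HV & Hf).
    assert (0 < S) by (rewrite HS; apply Rdiv_lt_0_compat; lra).
    assert (0 < V) by (rewrite HV; apply Rdiv_lt_0_compat; nra).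
    rewrite <- HS in Hf.
    rewrite (incidence_I0 F2 f2 HF2), (incidence_factor F1 f1 HF1), Hf by lra.
    repeat split; try lra.
    + rewrite HS. field. lra.
    + rewrite HV. field. lra.
Qed.

Lemma g1_lt I I' : 0 <= I -> I < I' -> a1 * I' <= Lambda -> g1 I' < g1 I.
Proof.
  intros HI HII' HI'. unfold g1.
  assert (HS : S1 I' < S1 I) by (unfold S1; apply Rmult_lt_compat_r;
    [apply Rinv_0_lt_compat|]; nra).
  assert (HS' : 0 <= S1 I') by (unfold S1; apply Rdiv_le_0_compat; lra).
  pose proof (f_antitone_I F1 f1 HF1 (S1 I') I I' HS' HI (Rlt_le _ _ HII')).
  pose proof (f_lt_S F1 f1 HF1 (S1 I') (S1 I) I HS' HS HI).
  lra.
Qed.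

Lemma repr1_eq : repr1 F1 Lambda mu r a1 = g1 0 / a1.
Proof.
  unfold repr1, Defs.sigma, g1, S0.
  rewrite (pd2_I0 F1 f1 HF1) by (apply Rdiv_le_0_compat; lra).
  unfold S1. rewrite Rmult_0_r, Rminus_0_r. reflexivity.
Qed.

Lemma E1_repr1_gt1 S V I :
  is_E1 Lambda mu r k a1 a2 F1 F2 S V I -> 1 < repr1 F1 Lambda mu r a1.
Proof.
  intros HE. apply is_E1_iff in HE as ((HI & HIL) & _ & _ & Hg).
  rewrite repr1_eq. apply Rlt_div_r; [lra|].
  pose proof (g1_lt 0 I (Rle_refl 0) HI (Rlt_le _ _ HIL)). lra.
Qed.

Lemma E1_exists :
  1 < repr1 F1 Lambda mu r a1 -> exists S V I, is_E1 Lambda mu r k a1 a2 F1 F2 S V I.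
Proof.
  rewrite repr1_eq. intros Hrepr. apply Rlt_div_r in Hrepr; [|lra].
  destruct (IVT_open (fun I => a1 - g1 I) 0 (Lambda / a1)) as [z [Hz Hgz]].
  - intros x _. apply continuity_pt_minus; [apply continuity_pt_const; now intros ? ?|].
    apply (continuity_pt_f_comp F1 f1 HF1). unfold S1. reg.
  - apply Rdiv_lt_0_compat; lra.
  - lra.
  - unfold g1, S1. replace (Lambda - a1 * (Lambda / a1)) with 0 by (field; lra).
    rewrite Rdiv_0_l, (f_S0 F1 f1 HF1) by (apply Rdiv_lt_0_compat; lra). lra.
  - exists (S1 z), (r * S1 z / mu), z. apply is_E1_iff.
    assert (a1 * z < Lambda) by (rewrite Rmult_comm; apply Rlt_div_r; lra).
    repeat split; lra.
Qed.

Lemma E1_unique S V I S' V' I' :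
  is_E1 Lambda mu r k a1 a2 F1 F2 S V I -> is_E1 Lambda mu r k a1 a2 F1 F2 S' V' I' ->
  S' = S /\ V' = V /\ I' = I.
Proof.
  intros HE HE'.
  apply is_E1_iff in HE as ((HI & HIL) & -> & -> & Hg).
  apply is_E1_iff in HE' as ((HI' & HIL') & -> & -> & Hg').
  assert (I' = I) as ->; [|auto].
  destruct (Rtotal_order I I') as [Hlt | [Heq | Hgt]]; auto.
  - pose proof (g1_lt I I'); lra.
  - pose proof (g1_lt I' I); lra.
Qed.

End SingleStrain1.

Section SingleStrain2.

Variables (Lambda mu r k a1 a2 : R) (F1 f1 F2 f2 : R -> R -> R).
Hypotheses (HLambda : 0 < Lambda) (Hmu : 0 < mu) (Hr : 0 < r) (Hk : 0 < k)
  (Ha2 : 0 < a2) (HF1 : incidence_hyp F1 f1) (HF2 : incidence_hyp F2 f2).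

Definition S2 (I : R) : R :=
  (Lambda - a2 * I) * (mu + k * I) / (mu * (r + mu + k * I)).
Definition V2 (I : R) : R := r * (Lambda - a2 * I) / (mu * (r + mu + k * I)).
Definition g2 (I : R) : R := f2 (S2 I) I + k * V2 I.

(* [S2' x = - S2_slope x / (mu (r + mu + k x)^2)]. *)
Definition S2_slope (x : R) : R :=
  a2 * mu * (r + mu) - k * r * Lambda + 2 * a2 * (r + mu) * k * x + a2 * k * k * x * x.

Lemma is_E2_iff S V I :
  is_E2 Lambda mu r k a1 a2 F1 F2 S V I <->
  (0 < I /\ a2 * I < Lambda) /\ S = S2 I /\ V = V2 I /\ g2 I = a2.
Proof.
  unfold is_E2, is_equilibrium, g2. split.
  - intros (HS & HV & HI & _ & _ & _ & _ & e1 & e2 & _ & e4).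
    rewrite (incidence_I0 F1 f1 HF1) in e1 by lra.
    rewrite (incidence_factor F2 f2 HF2) in e1, e4 by lra.
    assert (Hf : f2 S I = a2 - k * V).
    { assert (HI0 : I * (f2 S I + k * V - a2) = 0) by lra.
      destruct (Rmult_integral _ _ HI0); lra. }
    rewrite Hf in e1.
    assert (HSI : S * (mu * (r + mu + k * I)) = (Lambda - a2 * I) * (mu + k * I)).
    { replace (Lambda - a2 * I) with ((r + mu) * S - k * I * V) by lra.
      replace (((r + mu) * S - k * I * V) * (mu + k * I))
        with ((r + mu) * S * (mu + k * I) - k * I * (V * (mu + k * I))) by ring.
      replace (V * (mu + k * I)) with (r * S) by lra. ring. }
    assert (HS2 : S = S2 I) by (unfold S2; rewrite <- HSI; field; nra).
    assert (HV2 : V = V2 I).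
    { apply (Rmult_eq_reg_r (mu + k * I)); [|nra].
      replace (V * (mu + k * I)) with (r * S) by lra.
      rewrite HS2. unfold S2, V2. field. nra. }
    assert (0 < Lambda - a2 * I).
    { apply (Rmult_lt_reg_r (mu + k * I)); [nra|]. rewrite Rmult_0_l, <- HSI.
      apply Rmult_lt_0_compat; [lra | apply Rmult_lt_0_compat; nra]. }
    rewrite <- HS2, <- HV2. repeat split; lra.
  - intros ((HI & HIL) & HS & HV & Hg).
    assert (0 < S) by (rewrite HS; unfold S2;
      apply Rdiv_lt_0_compat; apply Rmult_lt_0_compat; nra).
    assert (0 < V) by (rewrite HV; unfold V2;
      apply Rdiv_lt_0_compat; apply Rmult_lt_0_compat; nra).
    rewrite <- HS, <- HV in Hg.
    rewrite (incidence_I0 F1 f1 HF1), (incidence_factor F2 f2 HF2) by lra.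
    replace (f2 S I) with (a2 - k * V) by lra.
    repeat split; try lra.
    + rewrite HS, HV. unfold S2, V2. field. nra.
    + rewrite HS, HV. unfold S2, V2. field. nra.
Qed.

Lemma S2_nonneg I : 0 <= I -> a2 * I <= Lambda -> 0 <= S2 I.
Proof.
  intros HI HIL. unfold S2.
  apply Rdiv_le_0_compat; [apply Rmult_le_pos | apply Rmult_lt_0_compat]; nra.
Qed.

Lemma V2_lt I I' : 0 <= I -> I < I' -> V2 I' < V2 I.
Proof.
  intros HI HII'. enough (0 < V2 I - V2 I') by lra. unfold V2.
  assert (0 < r + mu + k * I) by nra.
  assert (0 < r + mu + k * I') by nra.
  replace (r * (Lambda - a2 * I) / (mu * (r + mu + k * I))
           - r * (Lambda - a2 * I') / (mu * (r + mu + k * I')))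
    with (r * (I' - I) * (k * Lambda + a2 * (r + mu))
          / (mu * (r + mu + k * I) * (r + mu + k * I'))) by (field; lra).
  apply Rdiv_lt_0_compat; repeat apply Rmult_lt_0_compat; nra.
Qed.

Lemma S2_le I I' : 0 <= I -> I < I' -> 0 <= S2_slope I -> S2 I' <= S2 I.
Proof.
  intros HI HII' Hslope. enough (0 <= S2 I - S2 I') by lra. unfold S2.
  assert (0 < r + mu + k * I) by nra.
  assert (0 < r + mu + k * I') by nra.
  replace ((Lambda - a2 * I) * (mu + k * I) / (mu * (r + mu + k * I))
           - (Lambda - a2 * I') * (mu + k * I') / (mu * (r + mu + k * I')))
    with ((I' - I) * (S2_slope I + a2 * (r + mu) * k * (I' - I)
                      + a2 * k * k * I * (I' - I))
          / (mu * (r + mu + k * I) * (r + mu + k * I')))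
    by (unfold S2_slope; field; lra).
  apply Rdiv_le_0_compat; [|repeat apply Rmult_lt_0_compat; lra].
  apply Rmult_le_pos; [lra|].
  assert (0 <= a2 * (r + mu) * k * (I' - I)) by
    (repeat apply Rmult_le_pos; lra).
  assert (0 <= a2 * k * k * I * (I' - I)) by
    (repeat apply Rmult_le_pos; lra).
  lra.
Qed.

Lemma g2_lt I I' : 0 <= I -> I < I' -> a2 * I' <= Lambda -> 0 <= S2_slope I ->
  g2 I' < g2 I.
Proof.
  intros HI HII' HI' Hslope. unfold g2.
  pose proof (S2_nonneg I' ltac:(lra) HI') as HS'.
  pose proof (f_antitone_I F2 f2 HF2 (S2 I') I I' HS' HI (Rlt_le _ _ HII')).
  pose proof (f_le_S F2 f2 HF2 (S2 I') (S2 I) I HS' (S2_le I I' HI HII' Hslope) HI).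
  pose proof (V2_lt I I' HI HII').
  nra.
Qed.

Lemma repr2_eq : repr2 F2 Lambda mu r k a2 = g2 0 / a2.
Proof.
  unfold repr2, Defs.sigma, g2, S0.
  rewrite (pd2_I0 F2 f2 HF2) by (apply Rdiv_le_0_compat; lra).
  replace (S2 0) with (Lambda / (r + mu)) by (unfold S2; field; lra).
  unfold V2. field. lra.
Qed.

Lemma E2_repr2_gt1 S V I :
  is_E2 Lambda mu r k a1 a2 F1 F2 S V I -> 1 < repr2 F2 Lambda mu r k a2.
Proof.
  intros HE.
  assert (HSL : (r + mu) * S <= Lambda).
  { destruct HE as (HS & _ & HI & _ & _ & _ & _ & e1 & _).
    rewrite (incidence_I0 F1 f1 HF1) in e1 by lra.
    pose proof (incidence_nonneg F2 f2 HF2 S I). lra. }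
  apply is_E2_iff in HE as ((HI & HIL) & HS & _ & Hg).
  assert (HS0 : S2 I <= S2 0).
  { replace (S2 0) with (Lambda / (r + mu)) by (unfold S2; field; lra).
    rewrite <- HS. apply Rle_div_r; lra. }
  pose proof (S2_nonneg I ltac:(lra) ltac:(lra)) as HS2.
  pose proof (f_antitone_I F2 f2 HF2 (S2 I) 0 I HS2 (Rle_refl 0) (Rlt_le _ _ HI)).
  pose proof (f_le_S F2 f2 HF2 (S2 I) (S2 0) 0 HS2 HS0 (Rle_refl 0)).
  pose proof (V2_lt 0 I (Rle_refl 0) HI).
  rewrite repr2_eq. apply Rlt_div_r; [lra|]. unfold g2 in *. nra.
Qed.

Lemma E2_exists :
  1 < repr2 F2 Lambda mu r k a2 -> exists S V I, is_E2 Lambda mu r k a1 a2 F1 F2 S V I.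
Proof.
  rewrite repr2_eq. intros Hrepr. apply Rlt_div_r in Hrepr; [|lra].
  destruct (IVT_open (fun I => a2 - g2 I) 0 (Lambda / a2)) as [z [Hz Hgz]].
  - intros x Hx.
    assert (0 < Lambda / a2) by (apply Rdiv_lt_0_compat; lra).
    assert (0 < mu * (r + mu + k * x)) by (apply Rmult_lt_0_compat; nra).
    apply continuity_pt_minus; [apply continuity_pt_const; now intros ? ?|].
    apply continuity_pt_plus.
    + apply (continuity_pt_f_comp F2 f2 HF2). unfold S2. reg. lra.
    + unfold V2. reg. lra.
  - apply Rdiv_lt_0_compat; lra.
  - lra.
  - unfold g2, S2, V2. replace (Lambda - a2 * (Lambda / a2)) with 0 by (field; lra).
    rewrite !Rmult_0_l, !Rmult_0_r, !Rdiv_0_l, Rmult_0_r, Rplus_0_r.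
    rewrite (f_S0 F2 f2 HF2) by (apply Rdiv_lt_0_compat; lra). lra.
  - exists (S2 z), (V2 z), z. apply is_E2_iff.
    assert (a2 * z < Lambda) by (rewrite Rmult_comm; apply Rlt_div_r; lra).
    repeat split; lra.
Qed.

Lemma E2_unique S V I S' V' I' :
  is_E2 Lambda mu r k a1 a2 F1 F2 S V I -> is_E2 Lambda mu r k a1 a2 F1 F2 S' V' I' ->
  0 <= S2_slope I -> 0 <= S2_slope I' -> S' = S /\ V' = V /\ I' = I.
Proof.
  intros HE HE' Hslope Hslope'.
  apply is_E2_iff in HE as ((HI & HIL) & -> & -> & Hg).
  apply is_E2_iff in HE' as ((HI' & HIL') & -> & -> & Hg').
  assert (I' = I) as ->; [|auto].
  destruct (Rtotal_order I I') as [Hlt | [Heq | Hgt]]; auto.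
  - pose proof (g2_lt I I'); lra.
  - pose proof (g2_lt I' I); lra.
Qed.

Lemma S2_slope_nonneg_everywhere x :
  - a2 * r * mu - a2 * mu ^ 2 + k * Lambda * r < 0 -> 0 <= x -> 0 <= S2_slope x.
Proof.
  intros Hc Hx. unfold S2_slope.
  assert (0 <= 2 * a2 * (r + mu) * k * x) by (repeat apply Rmult_le_pos; lra).
  assert (0 <= a2 * k * k * x * x) by (repeat apply Rmult_le_pos; lra).
  nra.
Qed.

Lemma S2_slope_nonneg_above_root x :
  (- r * a2 - a2 * mu + sqrt (r * a2 * (r * a2 + a2 * mu + k * Lambda))) / (a2 * k) <= x ->
  0 <= S2_slope x.
Proof.
  set (D := r * a2 * (r * a2 + a2 * mu + k * Lambda)).
  intros Hx.
  assert (HD : 0 <= D) by (unfold D; apply Rmult_le_pos; nra).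
  pose proof (sqrt_sqrt D HD). pose proof (sqrt_pos D).
  assert (Hw : sqrt D <= a2 * k * x + a2 * (r + mu)).
  { apply (Rmult_le_compat_r (a2 * k)) in Hx; [|nra].
    replace ((- r * a2 - a2 * mu + sqrt D) / (a2 * k) * (a2 * k))
      with (- r * a2 - a2 * mu + sqrt D) in Hx by (field; lra).
    lra. }
  assert (a2 * S2_slope x = (a2 * k * x + a2 * (r + mu)) ^ 2 - D)
    by (unfold S2_slope, D; ring).
  nra.
Qed.

End SingleStrain2.

Theorem mainTheorem4
  (Lambda mu r k gamma1 gamma2 v1 v2 : R) (F1 f1 F2 f2 : R -> R -> R)
  (HLambda : 0 < Lambda) (Hmu : 0 < mu) (Hr : 0 < r) (Hk : 0 < k)
  (Hg1 : 0 < gamma1) (Hg2 : 0 < gamma2) (Hv1 : 0 <= v1) (Hv2 : 0 <= v2)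
  (HF1 : incidence_hyp F1 f1) (HF2 : incidence_hyp F2 f2) :
  let alpha1 := gamma1 + v1 + mu in
  let alpha2 := gamma2 + v2 + mu in
  let E1 := is_E1 Lambda mu r k alpha1 alpha2 F1 F2 in
  let E2 := is_E2 Lambda mu r k alpha1 alpha2 F1 F2 in
  (* (1) *)
  ((exists S V I, E1 S V I) -> 1 < repr1 F1 Lambda mu r alpha1) /\
  (1 < repr1 F1 Lambda mu r alpha1 ->
     exists S V I, E1 S V I /\
       forall S' V' I', E1 S' V' I' -> S' = S /\ V' = V /\ I' = I) /\
  (* (2) *)
  ((exists S V I, E2 S V I) <-> 1 < repr2 F2 Lambda mu r k alpha2) /\
  (- alpha2 * r * mu - alpha2 * mu ^ 2 + k * Lambda * r < 0 ->
     forall S V I S' V' I', E2 S V I -> E2 S' V' I' ->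
       S' = S /\ V' = V /\ I' = I) /\
  (- alpha2 * r * mu - alpha2 * mu ^ 2 + k * Lambda * r > 0 ->
     let lo := (- r * alpha2 - alpha2 * mu
                + sqrt (r * alpha2 * (r * alpha2 + alpha2 * mu + k * Lambda)))
               / (alpha2 * k) in
     let hi := Lambda / alpha2 in
     forall S V I S' V' I', E2 S V I -> E2 S' V' I' ->
       lo <= I <= hi -> lo <= I' <= hi ->
       S' = S /\ V' = V /\ I' = I).
Proof.
  intros alpha1 alpha2 E1 E2.
  assert (Ha1 : 0 < alpha1) by (unfold alpha1; lra).
  assert (Ha2 : 0 < alpha2) by (unfold alpha2; lra).
  clearbody alpha1 alpha2. subst E1 E2.
  pose proof (E2_unique Lambda mu r k alpha1 alpha2 F1 f1 F2 f2) as HE2_unique.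
  split; [|split; [|split; [|split]]].
  - intros (S & V & I & HE).
    eapply (E1_repr1_gt1 Lambda mu r k alpha1 alpha2 F1 f1 F2 f2); eauto.
  - intros Hrepr.
    destruct (E1_exists Lambda mu r k alpha1 alpha2 F1 f1 F2 f2) as (S & V & I & HE); auto.
    exists S, V, I. split; [exact HE|].
    intros S' V' I' HE'. eapply (E1_unique Lambda mu r k alpha1 alpha2 F1 f1 F2 f2); eauto.
  - split.
    + intros (S & V & I & HE).
      eapply (E2_repr2_gt1 Lambda mu r k alpha1 alpha2 F1 f1 F2 f2); eauto.
    + intros Hrepr. eapply (E2_exists Lambda mu r k alpha1 alpha2 F1 f1 F2 f2); eauto.
  - intros Hsub S V I S' V' I' HE HE'.
    apply HE2_unique; auto; apply S2_slope_nonneg_everywhere; auto;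
      apply Rlt_le; [apply HE | apply HE'].
  -
    intros Hsuper lo hi S V I S' V' I' HE HE' [HI _] [HI' _].
    apply HE2_unique; auto; apply S2_slope_nonneg_above_root; auto.
Qed.
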